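(* Let $G$ be a finite $2$-group and $\omega\in H^3(G,\mathbb{C}^\times)$, and suppose $\mathcal{Z}:=\mathcal{Z}(\mathrm{Vec}_G^\omega)$ has set of twists exactly $\{1,i,-i\}$. Then every simple object of the canonical Lagrangian subcategory $\mathrm{Rep}(G)\subset\mathcal{Z}$ is self-dual.
   Context: $\mathcal{Z}(\mathrm{Vec}_G^\omega)$ is the Drinfeld center of the category of $G$-graded vector spaces with associator twisted by $\omega$, a modular fusion category. The canonical Lagrangian subcategory is the fusion subcategory whose simple objects are the simple summands of $I(\mathbbm{1})$, where $I$ is the induction functor (adjoint of the forgetful functor $\mathcal{Z}(\mathrm{Vec}_G^\omega)\to\mathrm{Vec}_G^\omega$); it is braided equivalent to $\mathrm{Rep}(G)$ (Tannakian). *)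

From HB Require Import structures.
From mathcomp Require Import all_boot all_order all_algebra all_fingroup all_solvable all_field all_character.
Set Implicit Arguments. Unset Strict Implicit. Unset Printing Implicit Defensive.
Import Order.TTheory GRing.Theory Num.Theory.
Local Open Scope ring_scope.

(* Concrete (Dijkgraaf-Pasquier-Roche) model of Z(Vec_G^omega) = Rep(D^omega(G)).
   Scalars are algC (algebraic complex numbers), a model of C for all
   finite-group representation theory. *)

(* A normalized C^x-valued 3-cocycle on G (every class in H^3(G,C^x) has
   such a representative). *)
Definition normalized_3cocycle (gT : finGroupType) (G : {set gT})
    (w : gT -> gT -> gT -> algC) : Prop :=
  [/\ (forall x y z, x \in G -> y \in G -> z \in G -> w x y z != 0%R),
      (forall x y z t, x \in G -> y \in G -> z \in G -> t \in G ->
         (w y z t * w x (y * z)%g t * w x y z = w (x * y)%g z t * w x y (z * t)%g)%R)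
    & (forall x y, x \in G -> y \in G ->
         [/\ w 1%g x y = 1%R, w x 1%g y = 1%R & w x y 1%g = 1%R])].

(* The 2-cocycle on the centralizer C_G(a) induced by w (transgression):
   theta_a(x,y) = w(a,x,y) w(x,y,a) / w(x,a,y). *)
Definition theta_cocycle (gT : finGroupType) (w : gT -> gT -> gT -> algC)
    (a : gT) : gT -> gT -> algC :=
  fun x y => (w a x y * w x y a / w x a y)%R.

Definition proj_rep (gT : finGroupType) (C : {set gT}) (alpha : gT -> gT -> algC)
    n (rho : gT -> 'M[algC]_n) : Prop :=
  rho 1%g = 1%:M /\
  forall x y, x \in C -> y \in C -> (rho x *m rho y = alpha x y *: rho (x * y)%g)%R.

Definition proj_irr (gT : finGroupType) (C : {set gT}) n
    (rho : gT -> 'M[algC]_n) : Prop :=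
  (0 < n)%N /\
  forall U : 'M[algC]_n, (forall x, x \in C -> (U *m rho x <= U)%MS) ->
    \rank U = 0%N \/ \rank U = n.

(* Simple objects of Z(Vec_G^w): pairs (a, rho), a in G, rho an irreducible
   theta_a-projective representation of C_G(a); their twist is the scalar
   by which rho(a) acts. [is_twist G w t] : t is the twist of some simple. *)
Definition is_twist (gT : finGroupType) (G : {group gT})
    (w : gT -> gT -> gT -> algC) (t : algC) : Prop :=
  exists a, a \in G /\
  exists n (rho : gT -> 'M[algC]_n),
    [/\ proj_rep ('C_G[a])%g (theta_cocycle w a) rho, proj_irr ('C_G[a])%g rho
      & rho a = t%:M].

Lemma dual_mx_repr (gT : finGroupType) (G : {group gT}) n
    (rG : mx_representation algC G n) :
  mx_repr G (fun g => (rG g^-1%g)^T).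
Proof.
split; first by rewrite invg1 repr_mx1 trmx1.
move=> x y Gx Gy /=; by rewrite invMg repr_mxM ?groupV // trmx_mul.
Qed.

Definition dual_repr (gT : finGroupType) (G : {group gT}) n
    (rG : mx_representation algC G n) : mx_representation algC G n :=
  MxRepresentation (dual_mx_repr rG).

From HB Require Import structures.
From mathcomp Require Import all_boot all_order all_algebra all_fingroup all_solvable all_field all_character.
From mathcomp Require Import ring.
From Stdlib Require Import Classical.
Set Implicit Arguments. Unset Strict Implicit. Unset Printing Implicit Defensive.
Import Order.TTheory GRing.Theory Num.Theory.
Local Open Scope ring_scope.

(* Suppose some a in G has order k = 2^e >= 4. In the theta_a-twisted regular
   representation L of C_G(a), the operator L_a is central and the basis vector
   of 1 satisfies e_1 L_a^k = beta e_1 with beta != 0; as the orbit vectors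
   e_1 L_a^j (j < k) are independent, every k-th root of beta is an eigenvalue
   of L_a. An irreducible subrepresentation of the eigenspace is then a simple
   object with that twist, so for a k-th root r of beta all of r, -r, r i, -r i
   are twists. They cannot all lie in {1, i, -i}, hence G has exponent 2, all
   characters of G are real, and every representation is self-dual. *)

Lemma minimal_submx_exists (F : fieldType) n (P : 'M[F]_n -> Prop)
    (U : 'M[F]_n) :
  P U -> \rank U != 0%N ->
  exists2 V : 'M[F]_n, (V <= U)%MS & [/\ P V, \rank V != 0%N &
    forall W : 'M[F]_n, (W <= V)%MS -> P W ->
      \rank W = 0%N \/ \rank W = \rank V].
Proof.
have [k] := ubnP (\rank U); elim: k U => // k IH U ltUk PU nzU.
have [[W sWU [PW nzW neWU]] | noW] := classic (exists2 W : 'M[F]_n,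
  (W <= U)%MS & [/\ P W, \rank W != 0%N & \rank W != \rank U]).
  have ltWU : (\rank W < \rank U)%N by rewrite ltn_neqAle neWU mxrankS.
  have [V sVW minV] := IH W (leq_trans ltWU ltUk) PW nzW.
  by exists V => //; apply: submx_trans sVW sWU.
exists U => //; split => // W sWU PW.
have [|nzW] := eqVneq (\rank W) 0%N; first by left.
have [|neWU] := eqVneq (\rank W) (\rank U); first by right.
by case: noW; exists W.
Qed.

Definition orbit_eigvec (F : fieldType) n (A : 'M[F]_n) (u : 'rV[F]_n) nu k :=
  \sum_(j < k) nu ^+ (k - j.+1) *: (u *m A ^+ j).

Lemma orbit_eigvecP (F : fieldType) n (A : 'M[F]_n) (u : 'rV[F]_n) nu k :
  u *m A ^+ k = nu ^+ k *: u ->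
  orbit_eigvec A u nu k *m A = nu *: orbit_eigvec A u nu k.
Proof.
move=> uAk; pose f j := nu ^+ (k - j) *: (u *m A ^+ j).
apply/eqP; rewrite -subr_eq0 mulmx_suml scaler_sumr -sumrB.
under eq_bigr => j _ do rewrite -scalemxAl -mulmxA -[_ *m A]/(A ^+ j * A)
  -exprSr scalerA -exprS -subSn // -/(f j.+1) -/(f j).
rewrite -(big_mkord xpredT (fun j => f j.+1 - f j)) telescope_sumr //.
by rewrite /f subnn subn0 !expr0 scale1r mulmx1 uAk subrr.
Qed.

Section ProjectiveSubrepresentation.
Variables (gT : finGroupType) (H : {set gT}) (alpha : gT -> gT -> algC).
Variables (n : nat) (L : gT -> 'M[algC]_n).
Hypothesis L_proj : proj_rep H alpha L.

Definition proj_invariant m (U : 'M[algC]_(m, n)) := {in H, forall x, stablemx U (L x)}.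

Lemma restrict_proj_rep (U : 'M[algC]_n) :
  proj_invariant U -> proj_rep H alpha (fun x => restrictmx U (L x)).
Proof.
have [L1 LM] := L_proj; move=> invU; split.
  by rewrite L1 conjmx_scalar ?row_base_free.
move=> x y Hx Hy; rewrite -conjmxM ?inE ?stablemx_row_base ?invU // LM //.
by rewrite /conjmx -scalemxAr -scalemxAl.
Qed.

Lemma restrict_proj_irr (U : 'M[algC]_n) :
  proj_invariant U -> \rank U != 0%N ->
  (forall W : 'M[algC]_n, (W <= U)%MS -> proj_invariant W ->
     \rank W = 0%N \/ \rank W = \rank U) ->
  proj_irr H (fun x => restrictmx U (L x)).
Proof.
move=> invU nzU minU; split; first by rewrite lt0n.
move=> W invW; pose V := <<W *m row_base U>>%MS.
have sVU : (V <= U)%MS by rewrite genmxE -(eq_row_base U) submxMl.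
have invV : proj_invariant V.
  move=> x Hx; rewrite genmxE (eqmxMr _ (genmxE _)).
  by rewrite -stablemx_restrict ?invU //; apply: invW.
by have := minU V sVU invV; rewrite genmxE mxrankMfree ?row_base_free.
Qed.

Lemma proj_irr_of_eigenvector a nu (v : 'rV[algC]_n) :
  {in H, forall x, comm_mx (L a) (L x)} ->
  v != 0 -> v *m L a = nu *: v ->
  exists m (rho : gT -> 'M[algC]_m),
    [/\ proj_rep H alpha rho, proj_irr H rho & rho a = nu%:M].
Proof.
move=> La_central nz_v /eigenspaceP v_eig.
pose E := eigenspace (L a) nu.
have invE : proj_invariant E.
  by move=> x Hx; apply: comm_mx_stable_eigenspace; apply: La_central.
have nzE : \rank E != 0%N.
  by rewrite mxrank_eq0; apply: contraNneq nz_v => E0; rewrite -submx0 -E0.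
have [U sUE [invU nzU minU]] := minimal_submx_exists invE nzE.
exists (\rank U), (fun x => restrictmx U (L x)); split.
- exact: restrict_proj_rep.
- exact: restrict_proj_irr.
- by rewrite (conjmx_eigenvalue (a := nu)) ?row_base_free ?eq_row_base.
Qed.

End ProjectiveSubrepresentation.

Section TwistedRegularRepresentation.
Variables (gT : finGroupType) (H : {group gT}) (alpha : gT -> gT -> algC).
Hypothesis alpha_x1 : {in H, forall x, alpha x 1%g = 1}.
Hypothesis alpha_neq0 : {in H &, forall x y, alpha x y != 0}.
Hypothesis alpha_cocycle : {in H & &, forall x y z,
  alpha x y * alpha (x * y)%g z = alpha y z * alpha x (y * z)%g}.

Local Notation N := #|H|.

Definition gvec (y : gT) : 'rV[algC]_N := \row_j (enum_val j == y)%:R.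

(* Right multiplication by x on the alpha-twisted group algebra of H, in the
   basis (gvec y)_(y in H). *)
Definition twreg (x : gT) : 'M[algC]_N :=
  \matrix_(i, j)
    (if enum_val j == (enum_val i * x)%g then alpha (enum_val i) x else 0).

Lemma gvec_delta y (Hy : y \in H) : gvec y = delta_mx 0 (enum_rank_in Hy y).
Proof.
apply/rowP => j; rewrite !mxE eqxx /= -{1}(enum_rankK_in Hy Hy).
by rewrite (inj_eq enum_val_inj) eq_sym.
Qed.

Lemma gvec_twreg y x : y \in H -> gvec y *m twreg x = alpha y x *: gvec (y * x).
Proof.
move=> Hy; rewrite gvec_delta -rowE; apply/rowP => j; rewrite !mxE enum_rankK_in //.
by case: eqP; rewrite ?mulr1 ?mulr0.
Qed.

Lemma eq_gvec_mx m (M1 M2 : 'M[algC]_(N, m)) :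
  {in H, forall y, gvec y *m M1 = gvec y *m M2} -> M1 = M2.
Proof.
move=> eqM; apply/row_matrixP => i; have Hi := enum_valP i.
by rewrite !rowE -(enum_valK_in Hi i) -gvec_delta eqM.
Qed.

Lemma twreg_proj_rep : proj_rep H alpha twreg.
Proof.
split.
  by apply: eq_gvec_mx => y Hy; rewrite gvec_twreg // mulmx1 mulg1 alpha_x1 // scale1r.
move=> x y Hx Hy; apply: eq_gvec_mx => z Hz.
rewrite mulmxA gvec_twreg // -scalemxAl gvec_twreg ?groupM // -scalemxAr.
by rewrite gvec_twreg // !scalerA mulgA alpha_cocycle.
Qed.

Definition cocycle_pow a j := \prod_(i < j) alpha (a ^+ i)%g a.

Lemma gvec1_twreg_expg a j : a \in H ->
  gvec 1 *m twreg a ^+ j = cocycle_pow a j *: gvec (a ^+ j).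
Proof.
move=> Ha; elim: j => [|j IH].
  by rewrite expr0 mulmx1 /cocycle_pow big_ord0 scale1r expg0.
rewrite exprSr -[_ * twreg a]/(_ *m _) mulmxA IH -scalemxAl gvec_twreg ?groupX //.
by rewrite scalerA /cocycle_pow big_ord_recr expgSr.
Qed.

Lemma twreg_eigenvector a nu : a \in H -> nu ^+ #[a]%g = cocycle_pow a #[a]%g ->
  exists2 v : 'rV[algC]_N, v != 0 & v *m twreg a = nu *: v.
Proof.
move=> Ha nu_root; set k := #[a]%g in nu_root *.
exists (orbit_eigvec (twreg a) (gvec 1) nu k); last first.
  by apply: orbit_eigvecP; rewrite gvec1_twreg_expg // expg_order -nu_root.
have Hlast : (a ^+ k.-1)%g \in H by rewrite groupX.
have lt_last : (k.-1 < k)%N by rewrite prednK ?order_gt0.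
(* Only the term j = k.-1 contributes to the coordinate at a ^+ k.-1. *)
apply/eqP => /rowP /(_ (enum_rank_in Hlast (a ^+ k.-1)%g)) /eqP.
rewrite summxE mxE (bigD1 (Ordinal lt_last)) //= big1 => [|j ne_j]; last first.
  rewrite gvec1_twreg_expg // !mxE enum_rankK_in // eq_expg_mod_order !modn_small //.
  by move: ne_j; rewrite -val_eqE eq_sym /= => /negbTE ->; rewrite !mulr0.
rewrite addr0 gvec1_twreg_expg // !mxE enum_rankK_in // eqxx mulr1 prednK ?order_gt0 // subnn.
by rewrite mul1r; apply/negP/prodf_neq0 => i _; rewrite alpha_neq0 ?groupX.
Qed.

End TwistedRegularRepresentation.

Section Transgression.
Variables (gT : finGroupType) (G : {group gT}) (w : gT -> gT -> gT -> algC).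
Hypothesis w_normalized : normalized_3cocycle G w.
Variable a : gT.
Hypothesis Ga : a \in G.

Local Notation theta := (theta_cocycle w a).

Let w_neq0 x y z : x \in G -> y \in G -> z \in G -> w x y z != 0.
Proof. by case: w_normalized => w_neq0 _ _; apply: w_neq0. Qed.

Let w_cocycle x y z t : x \in G -> y \in G -> z \in G -> t \in G ->
  w y z t * w x (y * z)%g t * w x y z = w (x * y)%g z t * w x y (z * t)%g.
Proof. by case: w_normalized => _ w_cocycle _; apply: w_cocycle. Qed.

Let w_unit x y : x \in G -> y \in G ->
  [/\ w 1%g x y = 1, w x 1%g y = 1 & w x y 1%g = 1].
Proof. by case: w_normalized => _ _ w_unit; apply: w_unit. Qed.

Lemma theta_x1 x : x \in G -> theta x 1%g = 1.
Proof.
move=> Gx; have [_ _ w_ax1] := w_unit Ga Gx; have [_ w_x1a w_xa1] := w_unit Gx Ga.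
by rewrite /theta_cocycle w_ax1 w_x1a w_xa1 mulr1 divr1.
Qed.

Lemma theta_neq0 x y : x \in G -> y \in G -> theta x y != 0.
Proof. by move=> Gx Gy; rewrite !mulf_neq0 ?invr_eq0 ?w_neq0 ?groupM. Qed.

Lemma theta_aC x : x \in G -> theta a x = theta x a.
Proof.
move=> Gx; rewrite /theta_cocycle mulrAC divff ?w_neq0 // mul1r.
by rewrite -mulrA divff ?w_neq0 // mulr1.
Qed.

Lemma theta_cocycleM u x y :
  u \in ('C_G[a])%g -> x \in ('C_G[a])%g -> y \in ('C_G[a])%g ->
  theta u x * theta (u * x)%g y = theta x y * theta u (x * y)%g.
Proof.
move=> /subcent1P[Gu cau] /subcent1P[Gx cax] /subcent1P[Gy cay].
have P1 := w_cocycle Ga Gu Gx Gy; rewrite cau in P1.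
have P2 := w_cocycle Gu Ga Gx Gy; rewrite cax in P2.
have P3 := w_cocycle Gu Gx Ga Gy; rewrite cay in P3.
have P4 := w_cocycle Gu Gx Gy Ga.
set L1 := _ * _ * _ in P1; set R1 := _ * _ in P1.
set L2 := _ * _ * _ in P2; set R2 := _ * _ in P2.
set L3 := _ * _ * _ in P3; set R3 := _ * _ in P3.
set L4 := _ * _ * _ in P4; set R4 := _ * _ in P4.
(* The two sides of the goal differ by the alternating product of P1, ..., P4. *)
have nzK : L4 * R3 * L2 * R1 != 0 by rewrite !mulf_neq0 ?w_neq0 ?groupM.
have eqK : L4 * R3 * L2 * R1 = R4 * L3 * R2 * L1 by rewrite P1 P2 P3 P4.
rewrite /theta_cocycle !mulf_div; apply/eqP.
rewrite eqr_div ?mulf_neq0 ?w_neq0 ?groupM //; apply/eqP.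
by apply: (mulIf nzK); rewrite [in RHS]eqK /L1 /R1 /L2 /R2 /L3 /R3 /L4 /R4; ring.
Qed.

Lemma is_twist_root nu :
  nu ^+ #[a]%g = cocycle_pow theta a #[a]%g -> is_twist G w nu.
Proof.
move=> nu_root; pose C := ('C_G[a])%G.
have Ca : a \in C by apply/subcent1P.
have theta_C1 : {in C, forall x, theta x 1%g = 1}.
  by move=> x /subcent1P[Gx _]; apply: theta_x1.
have theta_Cneq0 : {in C &, forall x y, theta x y != 0}.
  by move=> x y /subcent1P[Gx _] /subcent1P[Gy _]; apply: theta_neq0.
have L_proj := twreg_proj_rep theta_C1 theta_cocycleM.
have La_central : {in C, forall x, comm_mx (twreg C theta a) (twreg C theta x)}.
  move=> x Cx; have [_ LM] := L_proj; have /subcent1P[Gx cax] := Cx.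
  by rewrite /comm_mx !LM // cax theta_aC.
have [v nz_v v_eig] := twreg_eigenvector theta_Cneq0 Ca nu_root.
have [m [rho rho_twist]] := proj_irr_of_eigenvector L_proj La_central nz_v v_eig.
by exists a; split => //; exists m, rho.
Qed.

Lemma is_twist_fourth_root_coset : (4 %| #[a]%g)%N ->
  exists r, forall z : algC, z ^+ 4 = 1 -> is_twist G w (r * z).
Proof.
move=> four_dvd_a; exists (#[a]%g.-root (cocycle_pow theta a #[a]%g)) => z z4.
apply: is_twist_root; rewrite exprMn rootCK ?order_gt0 //.
by rewrite -(divnK four_dvd_a) mulnC exprM z4 expr1n mulr1.
Qed.

End Transgression.

Lemma one_neqN1 : (1 : algC) != -1.
Proof. by rewrite -subr_eq0 opprK -mulr2n pnatr_eq0. Qed.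

Lemma sqr_eqN1_of_opp_twists (y : algC) :
  [\/ y = 1, y = 'i | y = - 'i] -> [\/ - y = 1, - y = 'i | - y = - 'i] ->
  y ^+ 2 = -1.
Proof.
case=> [->|->|->] Ny; rewrite ?sqrrN ?sqrCi //; move/negP: one_neqN1; case.
by case: Ny => [/esym|/(congr1 (fun t => t ^+ 2))|/(congr1 (fun t => t ^+ 2))];
  rewrite ?sqrrN ?sqrCi ?expr1n => /eqP.
Qed.

Lemma fourth_root_coset_not_twists (r : algC) :
  ~ (forall z : algC, z ^+ 4 = 1 -> [\/ r * z = 1, r * z = 'i | r * z = - 'i]).
Proof.
have fourth_rootN (z : algC) : z ^+ 4 = 1 -> (- z) ^+ 4 = 1.
  by move=> z4; rewrite exprNn z4 mulr1 -signr_odd expr0.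
have i4 : 'i ^+ 4 = 1 :> algC by rewrite (exprM _ 2 2) sqrCi sqrrN expr1n.
move=> twists; have r2 : r ^+ 2 = -1.
  apply: sqr_eqN1_of_opp_twists.
    by rewrite -[r]mulr1; apply: twists; rewrite expr1n.
  by rewrite -mulrN1; apply: twists; rewrite fourth_rootN ?expr1n.
have ri2 : (r * 'i) ^+ 2 = -1.
  apply: sqr_eqN1_of_opp_twists; first exact: twists.
  by rewrite -mulrN; apply: twists; rewrite fourth_rootN.
by move: ri2; rewrite exprMn r2 sqrCi mulrNN mulr1 => /eqP; apply/negP: one_neqN1.
Qed.

Lemma four_dvd_order_pgroup (gT : finGroupType) (G : {group gT}) g :
  (2.-group G)%g -> g \in G -> (g ^+ 2 != 1)%g -> (4 %| #[g]%g)%N.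
Proof.
move=> twoG Gg; rewrite -order_dvdn => /negP ord_g.
have [e ord_g_e] := p_natP (pnat_dvd (order_dvdG Gg) twoG).
rewrite ord_g_e in ord_g *; apply: (@dvdn_exp2l 2 2).
by case: e {ord_g_e} ord_g => [|[|e]].
Qed.

Lemma dual_repr_rsim (gT : finGroupType) (G : {group gT}) n
    (rG : mx_representation algC G n) :
  {in G, forall g, (g^-1 \in g ^: G)%g} -> mx_rsim rG (dual_repr rG).
Proof.
move=> realG; apply/cfRepr_rsimP/eqP/cfunP => g.
have -> : cfRepr (dual_repr rG) g = cfRepr rG g^-1%g.
  by rewrite !cfunElock groupV mxtrace_tr.
have [Gg | notGg] := boolP (g \in G); last by rewrite !cfun0 ?groupV.
by have /imsetP[h Gh ->] := realG g Gg; rewrite cfunJ.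
Qed.

Theorem lemma5p12 (gT : finGroupType) (G : {group gT})
    (w : gT -> gT -> gT -> algC) :
  (2.-group G)%g ->
  normalized_3cocycle G w ->
  (forall t : algC, is_twist G w t <-> [\/ t = 1, t = 'i | t = - 'i]) ->
  forall n (rG : mx_representation algC G n),
    mx_irreducible rG -> mx_rsim rG (dual_repr rG).
Proof.
move=> twoG w_normalized twistsE n rG _; apply: dual_repr_rsim => g Gg.
suff g2 : (g ^+ 2 = 1)%g.
  by rewrite -[g^-1%g]mulg1 -g2 expgS expg1 mulKg class_refl.
apply/eqP/contraT => g2_neq1.
have [r twists] := is_twist_fourth_root_coset w_normalized Gg
  (four_dvd_order_pgroup twoG Gg g2_neq1).
by exfalso; apply: (@fourth_root_coset_not_twists r) => z z4; apply/twistsE/twists.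
Qed.
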